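(* Consider the heteroscedastic linear model $y(i,k)=\tau_i+\mu+\mathbf g^T(k)\beta+\varepsilon(i,k)$ with treatments $i\in\{1,\ldots,v_1\}$, covariate indices $k\in\{1,\ldots,d\}$, known regressors $\mathbf g(k)\in\mathbb R^{v_2}$, uncorrelated errors with mean zero and $\mathrm{Var}(\varepsilon(i,k))=\sigma^2/\lambda_i$ where $\lambda_1,\ldots,\lambda_{v_1}>0$ are known. Let $w=(w_1,\ldots,w_{v_1})$ be a marginal treatment design with $w_i>0$ for all $i$, and let $\alpha=(\alpha_1,\ldots,\alpha_d)$ be a marginal covariate design feasible for $\mathbf K^T\beta$, i.e. $\mathcal C(\mathbf K)\subseteq\mathcal C(\mathbf S(\alpha))$. Then the product design $\xi=w\otimes\alpha$ (i.e. $\xi(i,k)=w_i\alpha_k$) is feasible for $\mathbf A^T\theta$, and its information matrix is $$\mathbf N_{\mathbf A}(w\otimes\alpha)=\begin{bmatrix}\mathbf N_{\mathbf Q_1}(w) & \mathbf 0\\ \mathbf 0 & \big(\sum_{i=1}^{v_1}\lambda_i w_i\big)\mathbf N_{\mathbf K}(\alpha)\end{bmatrix}.$$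
   Context: Write $\theta=(\tau^T,\mu,\beta^T)^T$ with $\tau=(\tau_1,\ldots,\tau_{v_1})^T$, $\beta\in\mathbb R^{v_2}$, $\mathbf h(k)=(1,\mathbf g^T(k))^T$ and $\mathbf f(i,k)=(\mathbf e_i^T,1,\mathbf g^T(k))^T$. A design $\xi$ is a nonnegative function on $\{1,\ldots,v_1\}\times\{1,\ldots,d\}$ with $\sum_{i,k}\xi(i,k)=1$; its moment matrix is $\mathbf M(\xi)=\sum_{i,k}\xi(i,k)\lambda_i\mathbf f(i,k)\mathbf f^T(i,k)$. Let $\mathbf Q_1\in\mathbb R^{v_1\times s_1}$ have full column rank, satisfy $\mathbf Q_1^T\mathbf 1_{v_1}=\mathbf 0$, and have no zero row; let $\mathbf K\in\mathbb R^{v_2\times s_2}$ have full column rank; let $\mathbf Q_2=(\mathbf 0_{s_2},\mathbf K^T)^T\in\mathbb R^{(v_2+1)\times s_2}$ and $\mathbf A=\mathrm{diag}(\mathbf Q_1,\mathbf Q_2)$. A design $\xi$ is feasible for $\mathbf A^T\theta$ if $\mathcal C(\mathbf A)\subseteq\mathcal C(\mathbf M(\xi))$, and then $\mathbf N_{\mathbf A}(\xi)=(\mathbf A^T\mathbf M^-(\xi)\mathbf A)^{-1}$ (any generalized inverse). A marginal treatment design $w$ is a vector of nonnegative weights $w_1,\ldots,w_{v_1}$ summing to one; $\mathbf M_1(w)=\mathrm{diag}(\lambda_1w_1,\ldots,\lambda_{v_1}w_{v_1})$ and, for $w>0$, $\mathbf N_{\mathbf Q_1}(w)=(\mathbf Q_1^T\mathbf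 M_1^{-1}(w)\mathbf Q_1)^{-1}$. A marginal covariate design $\alpha$ is a vector of nonnegative weights $\alpha_1,\ldots,\alpha_d$ summing to one; $\mathbf S(\alpha)=\sum_k\alpha_k\mathbf g(k)\mathbf g^T(k)-(\sum_k\alpha_k\mathbf g(k))(\sum_k\alpha_k\mathbf g(k))^T$, and for feasible $\alpha$, $\mathbf N_{\mathbf K}(\alpha)=(\mathbf K^T\mathbf S^-(\alpha)\mathbf K)^{-1}$. *)

From HB Require Import structures.
From mathcomp Require Import all_boot all_order all_algebra.
Set Implicit Arguments. Unset Strict Implicit. Unset Printing Implicit Defensive.
Import Order.TTheory GRing.Theory Num.Theory.
Local Open Scope ring_scope.

Section Defs.
Variables (R : realFieldType) (v1 d v2 : nat).

(* f(i,k) = (e_i^T, 1, g^T(k))^T, theta = (tau, mu, beta) in R^(v1 + (1 + v2)) *)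
Definition fvec (g : 'I_d -> 'cV[R]_v2) (i : 'I_v1) (k : 'I_d)
  : 'cV[R]_(v1 + (1 + v2)) :=
  col_mx (delta_mx i 0) (col_mx (1 : 'cV[R]_1) (g k)).

Definition Mxi (lam : 'I_v1 -> R) (g : 'I_d -> 'cV[R]_v2)
  (xi : 'I_v1 -> 'I_d -> R) : 'M[R]_(v1 + (1 + v2)) :=
  \sum_(i < v1) \sum_(k < d) (xi i k * lam i) *: (fvec g i k *m (fvec g i k)^T).

Definition prod_design (w : 'I_v1 -> R) (alpha : 'I_d -> R) : 'I_v1 -> 'I_d -> R :=
  fun i k => w i * alpha k.

Definition M1 (lam w : 'I_v1 -> R) : 'M[R]_v1 := diag_mx (\row_i (lam i * w i)).

Definition NQ1 (s1 : nat) (Q1 : 'M[R]_(v1, s1)) (lam w : 'I_v1 -> R) : 'M[R]_s1 :=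
  invmx (Q1^T *m invmx (M1 lam w) *m Q1).

Definition Smat (g : 'I_d -> 'cV[R]_v2) (alpha : 'I_d -> R) : 'M[R]_v2 :=
  \sum_(k < d) alpha k *: (g k *m (g k)^T)
  - (\sum_(k < d) alpha k *: g k) *m (\sum_(k < d) alpha k *: g k)^T.

Definition Amat (s1 s2 : nat) (Q1 : 'M[R]_(v1, s1)) (K : 'M[R]_(v2, s2))
  : 'M[R]_(v1 + (1 + v2), s1 + s2) :=
  block_mx Q1 0 0 (col_mx (0 : 'M[R]_(1, s2)) K).

End Defs.

Definition is_ginv (R : comNzRingType) (n : nat) (M G : 'M[R]_n) : Prop :=
  M *m G *m M = M.

Definition colincl (F : fieldType) (n p q : nat) (A : 'M[F]_(n, p)) (B : 'M[F]_(n, q))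
  : bool := (A^T <= B^T)%MS.

From HB Require Import structures.
From mathcomp Require Import all_boot all_order all_algebra.
Set Implicit Arguments. Unset Strict Implicit. Unset Printing Implicit Defensive.
Import Order.TTheory GRing.Theory Num.Theory.
Local Open Scope ring_scope.

(* The moment matrix of w (x) alpha is the block matrix
   [M1(w), c h^T; h c^T, L H(alpha)], where c = M1(w) 1, L = sum_i lam_i w_i,
   h = (1, gbar) is the alpha-mean of h(k) and H(alpha) = sum_k alpha_k h(k) h(k)^T.
   The Schur complement of the leading 1 in H(alpha) is S(alpha), so from
   K = S(alpha) Y and Q1^T 1 = 0 one solves M(w (x) alpha) X = A explicitly.
   Hence A^T G A = X^T A for every generalized inverse G, and X^T A is block
   diagonal with blocks Q1^T M1(w)^-1 Q1 and L^-1 Y^T K, while K^T H K = Y^T K.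
   Both blocks are invertible, being congruences of weighted sums of
   nonnegative rank-one matrices by matrices of full column rank. *)

Section BlockSums.
Variables (V : nmodType) (I : Type) (r : seq I) (P : pred I).

Lemma sum_col_mx m1 m2 n (A : I -> 'M[V]_(m1, n)) (B : I -> 'M[V]_(m2, n)) :
  \sum_(i <- r | P i) col_mx (A i) (B i) =
  col_mx (\sum_(i <- r | P i) A i) (\sum_(i <- r | P i) B i).
Proof.
elim: r => [|x r' IH]; first by rewrite !big_nil col_mx0.
by rewrite !big_cons; case: (P x); rewrite ?IH ?add_col_mx.
Qed.

Lemma sum_row_mx m n1 n2 (A : I -> 'M[V]_(m, n1)) (B : I -> 'M[V]_(m, n2)) :
  \sum_(i <- r | P i) row_mx (A i) (B i) =
  row_mx (\sum_(i <- r | P i) A i) (\sum_(i <- r | P i) B i).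
Proof.
elim: r => [|x r' IH]; first by rewrite !big_nil row_mx0.
by rewrite !big_cons; case: (P x); rewrite ?IH ?add_row_mx.
Qed.

Lemma sum_block_mx m1 m2 n1 n2 (A : I -> 'M[V]_(m1, n1)) (B : I -> 'M[V]_(m1, n2))
    (C : I -> 'M[V]_(m2, n1)) (D : I -> 'M[V]_(m2, n2)) :
  \sum_(i <- r | P i) block_mx (A i) (B i) (C i) (D i) =
  block_mx (\sum_(i <- r | P i) A i) (\sum_(i <- r | P i) B i)
           (\sum_(i <- r | P i) C i) (\sum_(i <- r | P i) D i).
Proof. by rewrite /block_mx sum_col_mx !sum_row_mx. Qed.

End BlockSums.

Section ComRingMatrix.
Variable R : comNzRingType.

Lemma ginv_form_mulmx n m (M G : 'M[R]_n) (X : 'M[R]_(n, m)) :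
  M^T = M -> is_ginv M G -> (M *m X)^T *m G *m (M *m X) = X^T *m M *m X.
Proof.
by move=> symM MGM; rewrite trmx_mul symM -[in RHS]MGM !mulmxA.
Qed.

Lemma mul_block_centering n p (b : 'cV[R]_n) (T : 'M[R]_n) (Z : 'M[R]_(n, p)) :
  block_mx 1%:M b^T b T *m col_mx (- (b^T *m Z)) Z = col_mx 0 ((T - b *m b^T) *m Z).
Proof.
by rewrite mul_block_col mul1mx addNr mulmxBl mulmxN mulmxA addrC.
Qed.

Lemma mul_col_centering n p (b : 'cV[R]_n) (Z : 'M[R]_(n, p)) :
  (col_mx 1%:M b)^T *m col_mx (- (b^T *m Z)) Z = 0.
Proof. by rewrite tr_col_mx trmx1 mul_row_col mul1mx addNr. Qed.

End ComRingMatrix.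

Lemma colinclP (F : fieldType) n p q (A : 'M[F]_(n, p)) (B : 'M[F]_(n, q)) :
  reflect (exists X, A = B *m X) (colincl A B).
Proof.
apply: (iffP submxP) => [[D AB] | [X ->]].
  by exists D^T; rewrite -[A]trmxK AB trmx_mul trmxK.
by exists X^T; rewrite trmx_mul.
Qed.

Section MomentMatrix.
Variable R : realFieldType.

Definition wsum (V : lmodType R) p (a : 'I_p -> R) (v : 'I_p -> V) : V :=
  \sum_k a k *: v k.

Definition moment_mx n p (a : 'I_p -> R) (v : 'I_p -> 'cV[R]_n) : 'M[R]_n :=
  \sum_k a k *: (v k *m (v k)^T).

Lemma trmx_wsum m n p (a : 'I_p -> R) (v : 'I_p -> 'M[R]_(m, n)) :
  (wsum a v)^T = wsum a (fun k => (v k)^T).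
Proof. by rewrite /wsum linear_sum; apply: eq_bigr => k _; rewrite linearZ. Qed.

Lemma mulmx_wsum m n q p1 p2 (c : 'I_p1 -> R) (a : 'I_p2 -> R)
    (U : 'I_p1 -> 'M[R]_(m, n)) (V : 'I_p2 -> 'M[R]_(n, q)) :
  wsum c U *m wsum a V = \sum_i \sum_k (c i * a k) *: (U i *m V k).
Proof.
rewrite mulmx_suml; apply: eq_bigr => i _; rewrite mulmx_sumr.
by apply: eq_bigr => k _; rewrite -scalemxAl -scalemxAr scalerA.
Qed.

Variables (n p : nat) (a : 'I_p -> R) (v : 'I_p -> 'cV[R]_n).

Lemma trmx_moment_mx : (moment_mx a v)^T = moment_mx a v.
Proof.
rewrite /moment_mx linear_sum; apply: eq_bigr => k _.
by rewrite linearZ /= trmx_mul trmxK.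
Qed.

Hypothesis a_ge0 : forall k, 0 <= a k.

Lemma moment_mx_form_eq0 (x : 'rV[R]_n) :
  x *m moment_mx a v *m x^T = 0 -> x *m moment_mx a v = 0.
Proof.
pose s k := (x *m v k) 0 0.
have xv k : x *m v k = (s k)%:M by apply: mx11_scalar.
have form : x *m moment_mx a v *m x^T = (\sum_k a k * s k ^+ 2)%:M.
  rewrite /moment_mx mulmx_sumr mulmx_suml raddf_sum; apply: eq_bigr => k _.
  rewrite -scalemxAr -scalemxAl !mulmxA -(mulmxA (x *m v k)) -trmx_mul xv.
  by rewrite tr_scalar_mx -scalar_mxM scale_scalar_mx expr2.
rewrite form => /matrixP/(_ 0 0); rewrite !mxE /= mulr1n => sum0.
have as0 k : a k * s k = 0.
  have := psumr_eq0P (fun k _ => mulr_ge0 (a_ge0 k) (sqr_ge0 (s k))) sum0 (i := k) isT.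
  rewrite expr2 mulrA => /eqP; rewrite mulf_eq0 => /orP[/eqP // | /eqP ->].
  by rewrite mulr0.
rewrite /moment_mx mulmx_sumr big1 // => k _.
by rewrite -scalemxAr mulmxA xv mul_scalar_mx scalerA as0 scale0r.
Qed.

Lemma unitmx_moment_congr m (B : 'M[R]_(n, m)) :
  \rank (moment_mx a v *m B) = m -> B^T *m moment_mx a v *m B \in unitmx.
Proof.
move=> rankSB; rewrite -row_free_unit; apply: inj_row_free => x xBSB.
have xBS : x *m B^T *m moment_mx a v = 0.
  apply: moment_mx_form_eq0; rewrite trmx_mul trmxK mulmxA.
  have -> : x *m B^T *m moment_mx a v *m B = 0 by rewrite -xBSB !mulmxA.
  by rewrite mul0mx.
apply/eqP; rewrite -(mulmx_free_eq0 _ (B := (moment_mx a v *m B)^T)).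
  by rewrite trmx_mul trmx_moment_mx mulmxA xBS.
by rewrite /row_free mxrank_tr rankSB.
Qed.

End MomentMatrix.

Section ProductDesign.
Variables (R : realFieldType) (v1 d v2 : nat).
Variables (lam w : 'I_v1 -> R) (g : 'I_d -> 'cV[R]_v2) (alpha : 'I_d -> R).

Local Notation c := (fun i => lam i * w i).
Local Notation L := (\sum_i lam i * w i).
Local Notation gbar := (wsum alpha g).
Local Notation e i := (delta_mx i 0 : 'cV[R]_v1).

Definition hvec k : 'cV[R]_(1 + v2) := col_mx 1%:M (g k).

Lemma trmx_Mxi (xi : 'I_v1 -> 'I_d -> R) : (Mxi lam g xi)^T = Mxi lam g xi.
Proof.
rewrite /Mxi linear_sum; apply: eq_bigr => i _.
rewrite linear_sum; apply: eq_bigr => k _.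
by rewrite linearZ /= trmx_mul trmxK.
Qed.

Lemma M1_moment_mx : M1 lam w = moment_mx c (fun i => e i).
Proof.
rewrite /M1 diag_mx_sum_delta; apply: eq_bigr => i _.
by rewrite mxE trmx_delta mul_delta_mx.
Qed.

Lemma trmx_M1 : (M1 lam w)^T = M1 lam w.
Proof. exact: tr_diag_mx. Qed.

Lemma unitmx_M1 : (forall i, 0 < c i) -> M1 lam w \in unitmx.
Proof.
move=> c_gt0; rewrite unitmxE det_diag unitfE.
by apply/prodf_neq0 => i _; rewrite mxE lt0r_neq0.
Qed.

Lemma sum_lam_w_neq0 :
  (forall i, 0 < lam i) -> (forall i, 0 < w i) -> \sum_i w i = 1 -> L != 0.
Proof.
move=> lam_gt0 w_gt0 w_sum1.
have [i0 _] : exists i, true && (0 < w i).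
  by apply: psumr_neq0P => [i _|]; [exact: ltW | rewrite w_sum1; exact/eqP/oner_neq0].
rewrite psumr_neq0 => [|i _]; last by rewrite ltW ?mulr_gt0.
by apply/hasP; exists i0; rewrite ?mem_index_enum ?mulr_gt0.
Qed.

Lemma M1_mulmx_const : M1 lam w *m const_mx 1 = wsum c (fun i => e i).
Proof.
apply/matrixP => i j; rewrite (ord1 j) mul_diag_mx summxE !mxE mulr1.
rewrite (bigD1 i) //= big1 => [|k ki]; rewrite !mxE ?eqxx ?mulr1 ?addr0 //.
by rewrite eq_sym (negbTE ki) mulr0.
Qed.

Lemma Smat_moment_mx : Smat g alpha = moment_mx alpha g - gbar *m gbar^T.
Proof. by []. Qed.

Lemma trmx_Smat : (Smat g alpha)^T = Smat g alpha.
Proof. by rewrite Smat_moment_mx linearB /= trmx_moment_mx trmx_mul trmxK. Qed.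

Hypothesis alpha_sum1 : \sum_k alpha k = 1.

Lemma Smat_centered : Smat g alpha = moment_mx alpha (fun k => g k - gbar).
Proof.
have outer k : (g k - gbar) *m (g k - gbar)^T =
    g k *m (g k)^T - (g k *m gbar^T + gbar *m (g k)^T) + gbar *m gbar^T.
  by rewrite linearB /= mulmxBl !mulmxBr opprB opprD !addrA addrAC.
rewrite /moment_mx; under eq_bigr do rewrite outer !(scalerDr, scalerN).
rewrite !big_split /= sumrN big_split /= -scaler_suml alpha_sum1 scale1r.
have -> : \sum_k alpha k *: (g k *m gbar^T) = gbar *m gbar^T.
  by rewrite mulmx_suml; apply: eq_bigr => k _; rewrite scalemxAl.
have -> : \sum_k alpha k *: (gbar *m (g k)^T) = gbar *m gbar^T.
  by rewrite trmx_wsum mulmx_sumr; apply: eq_bigr => k _; rewrite scalemxAr.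
by rewrite Smat_moment_mx opprD addrA subrK.
Qed.

Lemma wsum_hvec : wsum alpha hvec = col_mx 1%:M gbar.
Proof.
rewrite /wsum /hvec; under eq_bigr do rewrite scale_col_mx.
by rewrite sum_col_mx -scaler_suml alpha_sum1 scale1r.
Qed.

Lemma moment_hvec : moment_mx alpha hvec = block_mx 1%:M gbar^T gbar (moment_mx alpha g).
Proof.
rewrite /moment_mx /hvec.
under eq_bigr do rewrite tr_col_mx trmx1 mul_col_row !mul1mx mulmx1 scale_block_mx.
by rewrite sum_block_mx -scaler_suml alpha_sum1 scale1r trmx_wsum.
Qed.

Lemma Mxi_prod_design :
  Mxi lam g (prod_design w alpha) =
  block_mx (M1 lam w) (M1 lam w *m const_mx 1 *m (wsum alpha hvec)^T)
           (wsum alpha hvec *m (M1 lam w *m const_mx 1)^T) (L *: moment_mx alpha hvec).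
Proof.
have term i k : (w i * alpha k * lam i) *: (fvec g i k *m (fvec g i k)^T) =
    (c i * alpha k) *: block_mx (e i *m (e i)^T) (e i *m (hvec k)^T)
                                (hvec k *m (e i)^T) (hvec k *m (hvec k)^T).
  by rewrite /fvec tr_col_mx mul_col_row mulrAC [w i * _]mulrC.
rewrite /Mxi /prod_design.
under eq_bigr do (under eq_bigr do rewrite term scale_block_mx; rewrite sum_block_mx).
rewrite sum_block_mx M1_mulmx_const !trmx_wsum !mulmx_wsum.
congr block_mx.
- rewrite M1_moment_mx; apply: eq_bigr => i _.
  by rewrite -scaler_suml -mulr_sumr alpha_sum1 mulr1.
- rewrite exchange_big; apply: eq_bigr => k _; apply: eq_bigr => i _.
  by rewrite mulrC.
- rewrite /moment_mx scaler_suml; apply: eq_bigr => i _.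
  by rewrite scaler_sumr; apply: eq_bigr => k _; rewrite scalerA.
Qed.

Variables (s1 s2 : nat) (Q1 : 'M[R]_(v1, s1)) (Y : 'M[R]_(v2, s2)).

Lemma unitmx_Q1_form :
  (forall i, 0 < c i) -> \rank Q1 = s1 -> Q1^T *m invmx (M1 lam w) *m Q1 \in unitmx.
Proof.
move=> c_gt0 rkQ1.
have M1_unit := unitmx_M1 c_gt0.
have -> : Q1^T *m invmx (M1 lam w) *m Q1 =
    (invmx (M1 lam w) *m Q1)^T *m M1 lam w *m (invmx (M1 lam w) *m Q1).
  by rewrite trmx_mul trmx_inv trmx_M1 -!mulmxA mulKVmx.
rewrite M1_moment_mx; apply: unitmx_moment_congr => [i|]; first exact: ltW.
by rewrite -M1_moment_mx mulKVmx.
Qed.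

Lemma unitmx_K_form :
  (forall k, 0 <= alpha k) -> \rank (Smat g alpha *m Y) = s2 ->
  Y^T *m (Smat g alpha *m Y) \in unitmx.
Proof.
move=> alpha_ge0 rkSY; rewrite mulmxA Smat_centered.
by apply: unitmx_moment_congr; rewrite // -Smat_centered.
Qed.

Definition prod_design_preimage : 'M[R]_(v1 + (1 + v2), s1 + s2) :=
  block_mx (invmx (M1 lam w) *m Q1) 0 0 (L^-1 *: col_mx (- (gbar^T *m Y)) Y).

Lemma trmx_preimage_mul_Amat :
  prod_design_preimage^T *m Amat Q1 (Smat g alpha *m Y) =
  block_mx (Q1^T *m invmx (M1 lam w) *m Q1) 0 0 (L^-1 *: (Y^T *m (Smat g alpha *m Y))).
Proof.
rewrite /prod_design_preimage /Amat tr_block_mx !trmx0 mulmx_block.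
rewrite !(mulmx0, mul0mx, addr0, add0r) trmx_mul trmx_inv trmx_M1.
by rewrite linearZ /= -scalemxAl tr_col_mx mul_row_col mulmx0 add0r !mulmxA.
Qed.

Hypotheses (M1_unit : M1 lam w \in unitmx) (L_neq0 : L != 0).
Hypothesis Q1_sum0 : (const_mx 1 : 'rV[R]_v1) *m Q1 = 0.

Lemma mulmx_Mxi_preimage :
  Mxi lam g (prod_design w alpha) *m prod_design_preimage = Amat Q1 (Smat g alpha *m Y).
Proof.
rewrite Mxi_prod_design /prod_design_preimage /Amat mulmx_block.
rewrite !(mulmx0, addr0, add0r) mulKVmx //.
congr block_mx.
- by rewrite -scalemxAr -!mulmxA wsum_hvec mul_col_centering !mulmx0 scaler0.
- by rewrite trmx_mul trmx_M1 trmx_const -!mulmxA mulKVmx // Q1_sum0 mulmx0.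
- rewrite -scalemxAl -scalemxAr scalerA mulfV // scale1r.
  by rewrite moment_hvec mul_block_centering.
Qed.

End ProductDesign.

Theorem proposition1 (R : realFieldType) (v1 d v2 s1 s2 : nat)
  (lam : 'I_v1 -> R) (g : 'I_d -> 'cV[R]_v2)
  (Q1 : 'M[R]_(v1, s1)) (K : 'M[R]_(v2, s2))
  (w : 'I_v1 -> R) (alpha : 'I_d -> R) :
  (forall i, 0 < lam i) ->
  (* Q1: full column rank, Q1^T 1 = 0, no zero row *)
  \rank Q1 = s1 ->
  (const_mx 1 : 'rV[R]_v1) *m Q1 = 0 ->
  (forall i, row i Q1 != 0) ->
  (* K : full column rank *)
  \rank K = s2 ->
  (* w : marginal treatment design with positive weights *)
  (forall i, 0 < w i) -> \sum_(i < v1) w i = 1 ->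
  (* alpha : marginal covariate design, feasible for K^T beta *)
  (forall k, 0 <= alpha k) -> \sum_(k < d) alpha k = 1 ->
  colincl K (Smat g alpha) ->
  (* conclusion: w (x) alpha is feasible for A^T theta ... *)
  colincl (Amat Q1 K) (Mxi lam g (prod_design w alpha)) /\
  (* ... and for any generalized inverses, the information matrix is block diagonal *)
  (forall (G : 'M[R]_(v1 + (1 + v2))) (H : 'M[R]_v2),
     is_ginv (Mxi lam g (prod_design w alpha)) G ->
     is_ginv (Smat g alpha) H ->
     ((Amat Q1 K)^T *m G *m Amat Q1 K \in unitmx) /\
     (K^T *m H *m K \in unitmx) /\
     invmx ((Amat Q1 K)^T *m G *m Amat Q1 K) =
       block_mx (NQ1 Q1 lam w) 0
                0 ((\sum_(i < v1) lam i * w i) *: invmx (K^T *m H *m K))).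
Proof.
move=> lam_gt0 rkQ1 Q1_sum0 _ rkK w_gt0 w_sum1 alpha_ge0 alpha_sum1 /colinclP[Y KSY].
have c_gt0 i : 0 < lam i * w i by rewrite mulr_gt0.
have L_neq0 := sum_lam_w_neq0 lam_gt0 w_gt0 w_sum1.
have M1_unit := unitmx_M1 c_gt0.
set X := prod_design_preimage lam w g alpha Q1 Y.
have MXA : Mxi lam g (prod_design w alpha) *m X = Amat Q1 K.
  by rewrite KSY; apply: mulmx_Mxi_preimage.
split; first by apply/colinclP; exists X.
move=> G H ginvG ginvH.
have -> : (Amat Q1 K)^T *m G *m Amat Q1 K =
    block_mx (Q1^T *m invmx (M1 lam w) *m Q1) 0 0
             ((\sum_i lam i * w i)^-1 *: (Y^T *m K)).
  by rewrite -MXA ginv_form_mulmx ?trmx_Mxi // -mulmxA MXA KSY trmx_preimage_mul_Amat.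
have -> : K^T *m H *m K = Y^T *m K by rewrite KSY ginv_form_mulmx ?trmx_Smat // -mulmxA.
have N1_unit := unitmx_Q1_form c_gt0 rkQ1.
have YK_unit : Y^T *m K \in unitmx by rewrite KSY unitmx_K_form // -KSY.
have LYK_unit : (\sum_i lam i * w i)^-1 *: (Y^T *m K) \in unitmx.
  by rewrite unitmxZ // unitfE invr_eq0.
rewrite block_diag_mx_unit N1_unit LYK_unit YK_unit invmx_block_diag.
  by rewrite invmxZ // invrK.
by rewrite block_diag_mx_unit N1_unit LYK_unit.
Qed.
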